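(* Assume in addition that the link SNRs form an $m$-th order Markov chain: the joint density factorizes as $f(\boldsymbol\gamma_1,\dots,\boldsymbol\gamma_K)=\prod_{k=1}^K f_{\boldsymbol\gamma_k}(\boldsymbol\gamma_k\mid\boldsymbol\gamma_{k-m},\dots,\boldsymbol\gamma_{k-1})$ (indices $\le0$ omitted). Then, in the recursion for the value functions $J_{k,\phi}$ of Problem P1, the terminal equations $J_{K,1}=I^{-1}(b^D_K)/\gamma^{SD}_K$, $J_{K,2}=I^{-1}(b^D_K)/\tilde\gamma_K$, $J_{k,\mathsf T}=0$ hold, and for $k=1,\dots,K-1$ and $\mathbf{s}_k$ with $b^D_k>0$: $J_{k,1}(\mathbf{s}_k)=\min\{J_{k,1\to2}(\mathbf{s}_k),J_{k,1\to1}(\mathbf{s}_k)\}$, where $J_{k,1\to1}(\mathbf{s}_k)=\inf_{0\le R<\min\{R^{th}_k,b^D_k\}}\Big[\frac{I^{-1}(R)}{\gamma^{SD}_k}+J'(R)\Big]$, $J_{k,1\to2}(\mathbf{s}_k)=\min_{\min\{R^{th}_k,b^D_k\}\le R\le b^D_k}\Big[\frac{I^{-1}(R)}{\gamma^{SD}_k}+J''(R)\Big]$, and $J_{k,2}(\mathbf{s}_k)=\min_{0\le R\le b^D_k}\Big[\frac{I^{-1}(R)}{\tilde\gamma_k}+J'''(R)\Big]$, with (infimum over the empty set being $+\infty$) $J'(R)=\mathbb{E}[J_{k+1,1}(\boldsymbol\gamma_{k+1},b^R_k-g_k(R),b^D_k-R)\mid\boldsymbol\gamma_{k-m+1},\dots,\boldsymbol\gamma_k]$,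 $J''(R)=\mathbb{E}[J_{k+1,2}(\boldsymbol\gamma_{k+1},b^R_k-g_k(R),b^D_k-R)\mid\boldsymbol\gamma_{k-m+1},\dots,\boldsymbol\gamma_k]$, $J'''(R)=\mathbb{E}[J_{k+1,2}(\boldsymbol\gamma_{k+1},b^R_k,b^D_k-R)\mid\boldsymbol\gamma_{k-m+1},\dots,\boldsymbol\gamma_k]$, $g_k(x)=I\big(I^{-1}(x)\gamma^{SR}_k/\gamma^{SD}_k\big)$, and $R^{th}_k=I\big(I^{-1}(b^R_k)\gamma^{SD}_k/\gamma^{SR}_k\big)$. Here $R$ is the mutual information delivered to the destination in slot $k$ (i.e. $R=I(p_k\gamma^{SD}_k)$ in Phase 1 and $R=I(p_k\tilde\gamma_k)$ in Phase 2), and by convention $J_{k+1,\phi}(\boldsymbol\gamma,b^R,b^D)=0$ whenever $b^D\le 0$. In particular the value functions depend on the past SNRs only through $\boldsymbol\gamma_{k-m+1},\dots,\boldsymbol\gamma_k$.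
   Context: Notation: $I(x)=\log(1+x)$ for $x\ge0$, $I^{-1}(x)=e^x-1$. There are $K\ge1$ slots and a message of $B>0$ nats. In slot $k$ the link SNRs are $\boldsymbol\gamma_k=(\gamma^{SR}_k,\gamma^{SD}_k,\gamma^{RD}_k)$, all a.s. strictly positive; $\tilde\gamma_k=\max(\gamma^{SD}_k,\gamma^{RD}_k)$. Problem P1: one power $p_k\ge0$ per slot; $b^R_1=b^D_1=B$; if $b^R_k>0$ (Phase 1) then $b^R_{k+1}=b^R_k-I(p_k\gamma^{SR}_k)$, $b^D_{k+1}=b^D_k-I(p_k\gamma^{SD}_k)$; if $b^R_k\le0$ (Phase 2) then $b^R_{k+1}=b^R_k$, $b^D_{k+1}=b^D_k-I(p_k\tilde\gamma_k)$. Phase $\phi_k=\mathsf T$ if $b^D_k\le 0$, else $1$ if $b^R_k>0$, else $2$. Causal CSI $\mathbf{s}_k=(\boldsymbol\gamma_1,\dots,\boldsymbol\gamma_k,b^R_k,b^D_k)$; minimize $\mathbb{E}[\sum_k p_k\mid\mathbf{s}_1]$ over causal policies subject to $b^D_{K+1}\le0$ a.s. Value functions: $J_{k,\mathsf T}\equiv0$; $J_{K,1}(\mathbf s_K)=I^{-1}(b^D_K)/\gamma^{SD}_K$, $J_{K,2}(\mathbf s_K)=I^{-1}(b^D_K)/\tilde\gamma_K$; for $k<K$, $\phi\in\{1,2\}$: $J_{k,\phi}(\mathbf{s}_k)=\inf_{p_k\ge0}\{p_k+\mathbb{E}[J_{k+1,\phi_{k+1}}(\mathbf{s}_{k+1})\mid\phi_k=\phi,\mathbf{s}_k]\}$.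 The minimum expected sum energy of P1 equals $J_{1,1}(\mathbf s_1)$. *)

From HB Require Import structures.
From mathcomp Require Import all_boot all_order all_algebra.
From mathcomp Require Import all_classical all_reals all_analysis.
Set Implicit Arguments. Unset Strict Implicit. Unset Printing Implicit Defensive.
Import Order.TTheory GRing.Theory Num.Theory.
Local Open Scope classical_set_scope.
Local Open Scope ring_scope.

Section Defs.
Variable R : realType.

Definition snr := (R * R * R)%type.
Definition gSR (g : snr) : R := g.1.1.
Definition gSD (g : snr) : R := g.1.2.
Definition gRD (g : snr) : R := g.2.
Definition gtl (g : snr) : R := Num.max (gSD g) (gRD g).
Definition snr_pos (g : snr) : bool := [&& 0 < gSR g, 0 < gSD g & 0 < gRD g].

Definition cur (h : seq snr) : snr := last (0, 0, 0) h.

Definition I (x : R) : R := ln (1 + x).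
Definition Iinv (x : R) : R := expR x - 1.

(* Q k h : conditional law of gamma_{k+1} given (gamma_1,...,gamma_k) = h
           (size h = k).
   Jv n h bR bD = J_{k,phi_k}(s_k) with k = size h, n = K - k remaining
   slots after slot k, s_k = (h, bR, bD), current SNR gamma_k = last h,
   and the phase phi_k determined by (bR, bD). *)
Fixpoint Jv (Q : nat -> seq snr -> probability snr R) (n : nat)
    (h : seq snr) (bR bD : R) {struct n} : \bar R :=
  let g := cur h in
  if bD <= 0 then 0%E                            (* phase T *)
  else match n with
  | 0 => if 0 < bR then (Iinv bD / gSD g)%:E
         else (Iinv bD / gtl g)%:E
  | n'.+1 =>
      if 0 < bR then                             (* phase 1 *)
        ereal_inf [set (p%:E + \int[Q (size h) h]_(x in setT)
                     Jv Q n' (rcons h x) (bR - I (p * gSR g))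
                                         (bD - I (p * gSD g)))%E
                  | p in [set p : R | 0 <= p]]
      else                                       (* phase 2 *)
        ereal_inf [set (p%:E + \int[Q (size h) h]_(x in setT)
                     Jv Q n' (rcons h x) bR (bD - I (p * gtl g)))%E
                  | p in [set p : R | 0 <= p]]
  end.

Definition gk (g : snr) (x : R) : R := I (Iinv x * gSR g / gSD g).
Definition Rth (g : snr) (bR : R) : R := I (Iinv bR * gSD g / gSR g).

End Defs.

From HB Require Import structures.
From mathcomp Require Import all_boot all_order all_algebra.
From mathcomp Require Import all_classical all_reals all_analysis.
From mathcomp Require Import zify.
Import Order.TTheory GRing.Theory Num.Theory.
Local Open Scope classical_set_scope.
Local Open Scope ring_scope.

(* Optimising over the power p of a slot is the same as optimising over the
   mutual information r = I(p gamma) it delivers to the destination, at power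
   cost I^{-1}(r)/gamma; rates beyond the residual b^D are never better than
   b^D itself, since every continuation value vanishes once b^D <= 0.  In
   phase 1 the relay then receives g_k(r), and the rate interval [0, b^D]
   splits at R^th_k according to whether the relay decodes in slot k.  The
   Markov property is an induction on the remaining horizon: the Bellman step
   only sees the current SNR and the conditional law of the next one, both
   functions of the last m SNRs. *)

Section window.
Context {T : Type}.

Lemma drop_rcons_window (m k : nat) (h h' : seq T) (x : T) :
  size h = k -> size h' = k -> drop (k - m) h = drop (k - m) h' ->
  drop (k.+1 - m) (rcons h x) = drop (k.+1 - m) (rcons h' x).
Proof.
move=> hk h'k hh'; case: m hh' => [|m] hh'.
  by rewrite subn0 !drop_oversize ?size_rcons ?hk ?h'k.
rewrite subSS !drop_rcons ?hk ?h'k ?leq_subr //; congr rcons.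
case: (ltnP m k) => [mk|km].
  have -> : (k - m = 1 + (k - m.+1))%N by rewrite add1n subnSK.
  by rewrite -(drop_drop h 1) -(drop_drop h' 1) hh'.
have /eqP km0 : (k - m == 0)%N by rewrite subn_eq0.
have /eqP kSm0 : (k - m.+1 == 0)%N by rewrite subn_eq0 (leq_trans km).
by move: hh'; rewrite km0 kSm0 !drop0.
Qed.

Lemma last_drop_eq (x0 : T) {n : nat} {h h' : seq T} :
  (n < size h')%N -> drop n h = drop n h' -> last x0 h = last x0 h'.
Proof.
move=> n_lt hh'.
rewrite -(cat_take_drop n h) -(cat_take_drop n h') !last_cat hh'.
case: (drop n h') (size_drop n h') => [|y t] //= /eqP.
by rewrite eq_sym subn_eq0 leqNgt n_lt.
Qed.

Lemma all_last (P : pred T) (x0 : T) (h : seq T) :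
  (0 < size h)%N -> all P h -> P (last x0 h).
Proof. by case/lastP: h => [|h y] //= _; rewrite last_rcons all_rcons => /andP[]. Qed.

End window.

Section information.
Context {R : realType}.

Lemma IinvK : cancel (@Iinv R) (@I R).
Proof. by move=> r; rewrite /I /Iinv addrC subrK expRK. Qed.

Lemma IK (x : R) : 0 <= x -> Iinv (I x) = x.
Proof.
move=> x_ge0; rewrite /I /Iinv lnK; first by rewrite addrC addKr.
by rewrite posrE (lt_le_trans ltr01) // lerDl.
Qed.

Lemma I_ge0 (x : R) : 0 <= x -> 0 <= I x.
Proof. by move=> x_ge0; rewrite /I ln_ge0 // lerDl. Qed.

Lemma ler_Iinv : {homo @Iinv R : x y / x <= y}.
Proof. by move=> x y xy; rewrite /Iinv lerD2r ler_expR. Qed.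

Lemma Iinv_ge0 (x : R) : 0 <= x -> 0 <= Iinv x.
Proof. by move=> /ler_Iinv; rewrite /Iinv expR0 subrr. Qed.

Lemma gk_I (g : snr R) (p : R) : 0 < gSD g -> 0 <= p ->
  gk g (I (p * gSD g)) = I (p * gSR g).
Proof.
move=> gSD_gt0 p_ge0.
rewrite /gk IK; last by rewrite mulr_ge0 // ltW.
by rewrite mulrAC mulfK ?gt_eqF.
Qed.

Lemma Rth_ge0 (g : snr R) (bR : R) : 0 < gSR g -> 0 <= gSD g -> 0 <= bR ->
  0 <= Rth g bR.
Proof.
move=> gSR_gt0 gSD_ge0 bR_ge0.
by apply/I_ge0/divr_ge0; rewrite ?mulr_ge0 ?Iinv_ge0 // ltW.
Qed.

Lemma setU_split_Icc (a c b : R) : a <= c -> c <= b ->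
  [set r | a <= r < c] `|` [set r | c <= r <= b] = [set r | a <= r <= b].
Proof.
move=> ac cb; apply/seteqP; split=> r /=.
  case=> /andP[ar rc]; apply/andP; split=> //.
  - exact: ltW (lt_le_trans rc cb).
  - exact: le_trans ac ar.
move=> /andP[ar rb]; case: (ltP r c) => [rc|cr]; first by left; rewrite ar.
by right; apply/andP.
Qed.

Lemma ereal_inf_imageU (T : Type) (F : T -> \bar R) (S1 S2 : set T) :
  Order.min (ereal_inf (F @` S2)) (ereal_inf (F @` S1)) =
  ereal_inf (F @` (S1 `|` S2)).
Proof.
apply/eqP; rewrite eq_le; apply/andP; split.
  apply: le_ereal_inf_tmp => _ [r S12r <-]; rewrite ge_min.
  by case: S12r => Sr; apply/orP; [right|left]; apply: ereal_inf_lbound; exists r.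
rewrite image_setU le_min; apply/andP; split; apply: ereal_inf_le_tmp.
- exact: subsetUr.
- exact: subsetUl.
Qed.

Lemma ereal_inf_power_rate (c bD : R) (G : R -> \bar R) : 0 < c -> 0 < bD ->
  (forall r, bD <= r -> G r = G bD) ->
  ereal_inf [set (p%:E + G (I (p * c)))%E | p in [set p : R | 0 <= p]] =
  ereal_inf [set ((Iinv r / c)%:E + G r)%E | r in [set r : R | 0 <= r <= bD]].
Proof.
move=> c_gt0 bD_gt0 G_sat; have c_ge0 := ltW c_gt0.
apply/eqP; rewrite eq_le; apply/andP; split.
  apply: le_ereal_inf_tmp => _ [r /andP[r_ge0 _] <-].
  apply: ereal_inf_lbound; exists (Iinv r / c).
    by rewrite /= divr_ge0 ?Iinv_ge0.
  by rewrite divfK ?gt_eqF // IinvK.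
apply: le_ereal_inf_tmp => _ [p /= p_ge0 <-].
have pc_ge0 : 0 <= p * c by rewrite mulr_ge0.
have powerE : Iinv (I (p * c)) / c = p by rewrite IK // mulfK ?gt_eqF.
case: (leP (I (p * c)) bD) => [rb|br].
  apply: ereal_inf_lbound; exists (I (p * c)); last by rewrite powerE.
  by rewrite /= rb andbT I_ge0.
apply: (@le_trans _ _ ((Iinv bD / c)%:E + G bD)%E).
  by apply: ereal_inf_lbound; exists bD => //=; rewrite lexx (ltW bD_gt0).
rewrite (G_sat _ (ltW br)) leeD2r // lee_fin -[leRHS]powerE.
by rewrite ler_pM2r ?invr_gt0 // ler_Iinv // (ltW br).
Qed.

End information.

Section value_function.
Context {R : realType}.
Implicit Types (Q : nat -> seq (snr R) -> probability (snr R) R)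
  (h : seq (snr R)) (bR bD : R).

Definition bellman_step (g : snr R) (mu : probability (snr R) R)
    (V : snr R -> R -> R -> \bar R) (bR bD : R) : \bar R :=
  if bD <= 0 then 0%E
  else if 0 < bR then
    ereal_inf [set (p%:E + \int[mu]_(x in setT)
                 V x (bR - I (p * gSR g))%R (bD - I (p * gSD g))%R)%E
              | p in [set p : R | 0 <= p]]
  else
    ereal_inf [set (p%:E + \int[mu]_(x in setT) V x bR (bD - I (p * gtl g))%R)%E
              | p in [set p : R | 0 <= p]].

Lemma JvS Q n h bR bD :
  Jv Q n.+1 h bR bD =
  bellman_step (cur h) (Q (size h) h) (fun x => Jv Q n (rcons h x)) bR bD.
Proof. by []. Qed.

Lemma Jv_terminated Q n h bR bD : bD <= 0 -> Jv Q n h bR bD = 0%E.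
Proof. by move=> bD_le0; case: n => [|n] /=; rewrite bD_le0. Qed.

Lemma integral_Jv_terminated Q (mu : probability (snr R) R) n h bR bD :
  bD <= 0 -> (\int[mu]_(x in setT) Jv Q n (rcons h x) bR bD)%E = 0%E.
Proof.
move=> bD_le0; rewrite (eq_integral (fun=> 0%E)) ?integral0 // => x _.
exact: Jv_terminated.
Qed.

Lemma Jv_phase1 Q n h bR bD : 0 < bD -> 0 < bR -> 0 < gSD (cur h) ->
  Jv Q n.+1 h bR bD =
  ereal_inf [set ((Iinv r / gSD (cur h))%:E + \int[Q (size h) h]_(x in setT)
                    Jv Q n (rcons h x) (bR - gk (cur h) r) (bD - r))%E
            | r in [set r : R | 0 <= r <= bD]].
Proof.
move=> bD_gt0 bR_gt0 gSD_gt0; rewrite /= leNgt bD_gt0 bR_gt0 /=.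
pose J r := (\int[Q (size h) h]_(x in setT)
               Jv Q n (rcons h x) (bR - gk (cur h) r) (bD - r))%E.
transitivity
  (ereal_inf [set (p%:E + J (I (p * gSD (cur h))))%E | p in [set p : R | 0 <= p]]).
  by congr ereal_inf; apply: eq_imagel => p p_ge0; rewrite /J gk_I.
apply: (@ereal_inf_power_rate _ _ _ J) => // r r_ge.
by rewrite /J !integral_Jv_terminated ?subrr // subr_le0.
Qed.

Lemma Jv_phase2 Q n h bR bD : 0 < bD -> bR <= 0 -> 0 < gtl (cur h) ->
  Jv Q n.+1 h bR bD =
  ereal_inf [set ((Iinv r / gtl (cur h))%:E + \int[Q (size h) h]_(x in setT)
                    Jv Q n (rcons h x) bR (bD - r))%E
            | r in [set r : R | 0 <= r <= bD]].
Proof.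
move=> bD_gt0 bR_le0 gtl_gt0; rewrite /= leNgt bD_gt0 ltNge bR_le0 /=.
pose J r := (\int[Q (size h) h]_(x in setT) Jv Q n (rcons h x) bR (bD - r))%E.
apply: (@ereal_inf_power_rate _ _ _ J) => // r r_ge.
by rewrite /J !integral_Jv_terminated ?subrr // subr_le0.
Qed.

Lemma Jv_markov {m : nat} {Q Qm : nat -> seq (snr R) -> probability (snr R) R} :
  (0 < m)%N -> (forall k h, size h = k -> Q k h = Qm k (drop (k - m) h)) ->
  forall n k h h', (0 < k)%N -> size h = k -> size h' = k ->
  drop (k - m) h = drop (k - m) h' ->
  forall bR bD, Jv Q n h bR bD = Jv Q n h' bR bD.
Proof.
move=> m_gt0 QE n; elim: n => [|n IHn] k h h' k_gt0 hk h'k hh' bR bD;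
  have cur_eq : cur h = cur h' by apply: (last_drop_eq _ _ hh'); rewrite h'k; lia.
  by rewrite /= cur_eq.
rewrite !JvS cur_eq hk h'k (QE k h hk) (QE k h' h'k) hh'.
congr bellman_step; apply/funext => x; apply/funext => bR'; apply/funext => bD'.
apply: (IHn k.+1); rewrite ?size_rcons ?hk ?h'k //.
exact: drop_rcons_window.
Qed.

End value_function.

Theorem theorem2 (R : realType) (K m : nat)
  (Q : nat -> seq (snr R) -> probability (snr R) R)
  (Qm : nat -> seq (snr R) -> probability (snr R) R) :
  (0 < K)%N -> (0 < m)%N ->
  (forall k h, Q k h [set g | snr_pos g] = 1%E) ->
  (* m-th order Markov property: the conditional law of gamma_{k+1} given
     gamma_1..gamma_k is Qm k applied to gamma_{k-m+1}..gamma_k *)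
  (forall k h, size h = k -> Q k h = Qm k (drop (k - m) h)) ->
  [/\
   (forall h bR bD, size h = K -> 0 < bD -> 0 < bR ->
      Jv Q 0 h bR bD = (Iinv bD / gSD (cur h))%:E) /\
   (forall h bR bD, size h = K -> 0 < bD -> bR <= 0 ->
      Jv Q 0 h bR bD = (Iinv bD / gtl (cur h))%:E),
   (forall k h bR bD, (1 <= k <= K)%N -> size h = k -> bD <= 0 ->
      Jv Q (K - k) h bR bD = 0%E),
   (forall k h bR bD, (1 <= k < K)%N -> size h = k -> all (@snr_pos R) h ->
      0 < bD -> 0 < bR ->
      let g := cur h in
      let mu := Qm k (drop (k - m) h) in
      let J' := fun r => (\int[mu]_(x in setT)
                  Jv Q (K - k.+1) (rcons h x) (bR - gk g r) (bD - r))%E in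
      let J'' := fun r => (\int[mu]_(x in setT)
                  Jv Q (K - k.+1) (rcons h x) (bR - gk g r) (bD - r))%E in
      let th := Num.min (Rth g bR) bD in
      let J11 := ereal_inf [set ((Iinv r / gSD g)%:E + J' r)%E
                           | r in [set r : R | 0 <= r < th]] in
      let J12 := ereal_inf [set ((Iinv r / gSD g)%:E + J'' r)%E
                           | r in [set r : R | th <= r <= bD]] in
      Jv Q (K - k) h bR bD = Order.min J12 J11),
   (forall k h bR bD, (1 <= k < K)%N -> size h = k -> all (@snr_pos R) h ->
      0 < bD -> bR <= 0 ->
      let g := cur h in
      let mu := Qm k (drop (k - m) h) in
      let J''' := fun r => (\int[mu]_(x in setT)
                  Jv Q (K - k.+1) (rcons h x) bR (bD - r))%E in
      Jv Q (K - k) h bR bD =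
        ereal_inf [set ((Iinv r / gtl g)%:E + J''' r)%E
                  | r in [set r : R | 0 <= r <= bD]])
   &
   (forall k h h', (1 <= k <= K)%N -> size h = k -> size h' = k ->
      drop (k - m) h = drop (k - m) h' ->
      forall bR bD, Jv Q (K - k) h bR bD = Jv Q (K - k) h' bR bD)].
Proof.
(* Positivity of the current SNR comes from the all-snr_pos premises. *)
move=> _ m_gt0 _ QE; split.
- by split=> h bR bD _ bD_gt0 bR0 /=; rewrite leNgt bD_gt0 /= ?bR0 // ltNge bR0.
- by move=> k h bR bD _ _; exact: Jv_terminated.
- move=> k h bR bD /andP[k_ge1 k_lt] hk h_pos bD_gt0 bR_gt0 g mu J' J'' th J11 J12.
  have /and3P[gSR_gt0 gSD_gt0 _] : snr_pos g by apply: all_last; rewrite ?hk.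
  have th_ge0 : 0 <= th by rewrite le_min Rth_ge0 ?ltW.
  have th_le : th <= bD by rewrite ge_min lexx orbT.
  rewrite /J12 /J11 /J'' -/J' ereal_inf_imageU setU_split_Icc //.
  by rewrite -subnSK // Jv_phase1 // hk (QE _ _ hk).
- move=> k h bR bD /andP[k_ge1 k_lt] hk h_pos bD_gt0 bR_le0 g mu J'''.
  have /and3P[_ gSD_gt0 _] : snr_pos g by apply: all_last; rewrite ?hk.
  have gtl_gt0 : 0 < gtl g by rewrite /gtl lt_max gSD_gt0.
  by rewrite -subnSK // Jv_phase2 // hk (QE _ _ hk).
- move=> k h h' /andP[k_ge1 _] hk h'k hh' bR bD.
  exact: (Jv_markov m_gt0 QE _ _ _ _ k_ge1 hk h'k hh').
Qed.
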